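(* Let $G\in\mathrm{C}^1(\mathbb{R})$ be coercive and $V\in\mathrm{Lip}(\mathbb{R})$ be $1$-periodic. For all $\theta_1,\theta_2\in\mathbb{R}$ with $\theta_1<\theta_2$, the function $g_{\theta_1,\theta_2}=f_{\theta_2}-f_{\theta_1}$ satisfies $$(\theta_2-\theta_1)e^{-K_1(\theta_1,\theta_2)}\le g_{\theta_1,\theta_2}(x)\le(\theta_2-\theta_1)e^{K_1(\theta_1,\theta_2)}\quad\text{for all }x\in\mathbb{R},$$ where $K_1(\theta_1,\theta_2)=\max\{|G'(p)|:\,\min_{x\in[0,1]}f_{\theta_1}(x)\le p\le\max_{x\in[0,1]}f_{\theta_2}(x)\}$.
   Context: $G$ coercive means $G(p)\to\infty$ as $p\to\pm\infty$. For each $\theta\in\mathbb{R}$, $f_\theta\in\mathrm{C}^1(\mathbb{R})$ denotes the unique $1$-periodic function such that $\int_0^1 f_\theta(x)dx=\theta$ and, for some (unique) constant $\overline{H}(\theta)\in\mathbb{R}$, $f_\theta'(x)+G(f_\theta(x))+V(x)=\overline{H}(\theta)$ for all $x\in\mathbb{R}$. *)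

From Stdlib Require Import Reals.
From Coquelicot Require Import Coquelicot.
Open Scope R_scope.

Definition is_C1 (f : R -> R) : Prop :=
  (forall x, ex_derive f x) /\ (forall x, continuous (Derive f) x).

Definition periodic1 (f : R -> R) : Prop := forall x, f (x + 1) = f x.

Definition lipschitz (f : R -> R) : Prop :=
  exists L : R, forall x y, Rabs (f x - f y) <= L * Rabs (x - y).

Definition coercive (G : R -> R) : Prop :=
  filterlim G (Rbar_locally p_infty) (Rbar_locally p_infty) /\
  filterlim G (Rbar_locally m_infty) (Rbar_locally p_infty).

Definition is_f_theta (G V : R -> R) (theta : R) (f : R -> R) : Prop :=
  is_C1 f /\ periodic1 f /\ RInt f 0 1 = theta /\
  exists H : R, forall x, Derive f x + G (f x) + V x = H.

Definition max01 (f : R -> R) : R :=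
  real (Lub_Rbar (fun y => exists x, 0 <= x <= 1 /\ y = f x)).
Definition min01 (f : R -> R) : R :=
  real (Glb_Rbar (fun y => exists x, 0 <= x <= 1 /\ y = f x)).

Definition K1 (G f1 f2 : R -> R) : R :=
  real (Lub_Rbar (fun y => exists p, min01 f1 <= p <= max01 f2 /\
                                     y = Rabs (Derive G p))).

(* The difference g = f2 - f1 is 1-periodic with mean theta2 - theta1 > 0 and
   solves g' = a - (G(f2) - G(f1)) with the constant a = H(theta2) - H(theta1),
   where |G(f2) - G(f1)| <= K |g| by the mean value theorem.  Reversing time
   replaces a by -a, so the sign of a may be chosen.  If g were negative
   somewhere, then for a >= 0 the weight g e^(-Kt) would be nondecreasing on
   {g < 0}, so g would stay negative backwards over a whole period, hence
   everywhere, contradicting its positive mean.  Once g >= 0, for a <= 0 the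
   inequality g' <= K g makes g e^(-Kt) nonincreasing, which over one period
   gives the Harnack inequality g(y) <= e^K g(x); averaging in y, resp. in x,
   yields the two bounds. *)

From Stdlib Require Import Reals Lra ZArith.
From Coquelicot Require Import Coquelicot.
Open Scope R_scope.

Lemma periodic1_INR f : periodic1 f -> forall n x, f (x + INR n) = f x.
Proof.
  intros P n; induction n as [|n IH]; intros x.
  - simpl; now rewrite Rplus_0_r.
  - rewrite S_INR, <- (IH x), <- (P (x + INR n)). f_equal; ring.
Qed.

Lemma periodic1_IZR f : periodic1 f -> forall z x, f (x + IZR z) = f x.
Proof.
  intros P z x. destruct z as [|p|p].
  - now rewrite Rplus_0_r.
  - now rewrite <- positive_nat_Z, <- INR_IZR_INZ, periodic1_INR.
  - rewrite <- Pos2Z.opp_pos, opp_IZR, <- positive_nat_Z, <- INR_IZR_INZ.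
    rewrite <- (periodic1_INR f P (Pos.to_nat p) (x + - _)). f_equal; ring.
Qed.

Lemma periodic1_shift_into f : periodic1 f ->
  forall a x, exists t, a <= t <= a + 1 /\ f x = f t.
Proof.
  intros P a x. destruct (archimed (x - a)) as [h1 h2].
  exists (x + IZR (1 - up (x - a))). split.
  - rewrite minus_IZR. lra.
  - now rewrite periodic1_IZR.
Qed.

Lemma periodic1_reflect f : periodic1 f -> periodic1 (fun t => f (- t)).
Proof. intros P t. rewrite <- (P (- (t + 1))). f_equal; ring. Qed.

Lemma continuous_of_derivable (f : R -> R) :
  (forall x, ex_derive f x) -> forall x, continuous f x.
Proof. intros D x. exact (@ex_derive_continuous R_AbsRing R_NormedModule f x (D x)). Qed.

Lemma bounded_on_segment f a b : a <= b -> (forall x, continuous f x) ->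
  exists B, forall x, a <= x <= b -> Rabs (f x) <= B.
Proof.
  intros hab C.
  destruct (continuity_ab_maj (fun x => Rabs (f x)) a b hab) as [M [HM _]].
  - intros x _. apply (continuity_pt_comp f Rabs); [apply continuity_pt_filterlim, C |].
    apply Rcontinuity_abs.
  - now exists (Rabs (f M)).
Qed.

Lemma real_Lub_Rbar_ge (E : R -> Prop) B : (forall z, E z -> z <= B) ->
  forall z, E z -> z <= real (Lub_Rbar E).
Proof.
  intros HB z Ez. destruct (Lub_Rbar_correct E) as [ub lub].
  specialize (ub z Ez). specialize (lub (Finite B) HB).
  destruct (Lub_Rbar E); simpl in *; tauto.
Qed.

Lemma real_Glb_Rbar_le (E : R -> Prop) B : (forall z, E z -> B <= z) ->
  forall z, E z -> real (Glb_Rbar E) <= z.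
Proof.
  intros HB z Ez. destruct (Glb_Rbar_correct E) as [lb glb].
  specialize (lb z Ez). specialize (glb (Finite B) HB).
  destruct (Glb_Rbar E); simpl in *; tauto.
Qed.

Lemma max01_ge f : (forall x, continuous f x) -> periodic1 f ->
  forall x, f x <= max01 f.
Proof.
  intros C P x. destruct (periodic1_shift_into f P 0 x) as [t [ht ->]].
  destruct (continuity_ab_maj f 0 1) as [M [HM _]];
    [lra | intros; apply continuity_pt_filterlim, C |].
  apply (real_Lub_Rbar_ge _ (f M)).
  - intros z [u [hu ->]]. now apply HM.
  - exists t; split; [lra | reflexivity].
Qed.

Lemma min01_le f : (forall x, continuous f x) -> periodic1 f ->
  forall x, min01 f <= f x.
Proof.
  intros C P x. destruct (periodic1_shift_into f P 0 x) as [t [ht ->]].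
  destruct (continuity_ab_min f 0 1) as [M [HM _]];
    [lra | intros; apply continuity_pt_filterlim, C |].
  apply (real_Glb_Rbar_le _ (f M)).
  - intros z [u [hu ->]]. now apply HM.
  - exists t; split; [lra | reflexivity].
Qed.

Lemma RInt_le_const (f : R -> R) c : (forall x, continuous f x) ->
  (forall x, f x <= c) -> RInt f 0 1 <= c.
Proof.
  intros C Hc. apply Rle_trans with (RInt (fun _ => c) 0 1).
  - apply RInt_le; [lra | | apply ex_RInt_const | intros; apply Hc].
    apply (@ex_RInt_continuous R_CompleteNormedModule); auto.
  - rewrite RInt_const. unfold scal; simpl; unfold mult; simpl; lra.
Qed.

Lemma RInt_ge_const (f : R -> R) c : (forall x, continuous f x) ->
  (forall x, c <= f x) -> c <= RInt f 0 1.
Proof.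
  intros C Hc. apply Rle_trans with (RInt (fun _ => c) 0 1).
  - rewrite RInt_const. unfold scal; simpl; unfold mult; simpl; lra.
  - apply RInt_le; [lra | apply ex_RInt_const | | intros; apply Hc].
    apply (@ex_RInt_continuous R_CompleteNormedModule); auto.
Qed.

Lemma locally_neg_of_continuous (h : R -> R) s : continuous h s -> h s < 0 ->
  exists eps : posreal, forall t, Rabs (t - s) < eps -> h t < 0.
Proof.
  intros C hs. destruct (C _ (open_lt 0 (h s) hs)) as [eps Heps].
  exists eps. intros t ht. now apply Heps.
Qed.

Lemma neg_backward_of_deriv_nonneg (h h' : R -> R) x0 y :
  (forall t, is_derive h t (h' t)) -> (forall t, h t < 0 -> 0 <= h' t) ->
  h x0 < 0 -> y <= x0 -> h y < 0.
Proof.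
  intros Dh Hh hx0 yx0.
  destruct (Rlt_or_le (h y) 0) as [|hy]; [assumption | exfalso].
  set (E := fun t => y <= t <= x0 /\ 0 <= h t).
  destruct (completeness E) as [s [ub lub]].
  { exists x0. intros t [ht _]. lra. }
  { exists y. split; [lra | assumption]. }
  assert (ys : y <= s) by (apply ub; split; [lra | assumption]).
  assert (sx0 : s <= x0) by (apply lub; intros t [ht _]; lra).
  assert (hs : 0 <= h s).
  { destruct (Rlt_or_le (h s) 0) as [hs|]; [exfalso | assumption].
    destruct (locally_neg_of_continuous h s
                (continuous_of_derivable h (fun t => ex_intro _ _ (Dh t)) s) hs)
      as [eps Heps].
    assert (s <= s - eps / 2); [| destruct eps; simpl in *; lra].
    apply lub. intros t [ht Et]. destruct (Rle_or_lt t (s - eps / 2)) as [|lt]; [assumption|].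
    assert (t <= s) by (apply ub; split; assumption).
    assert (h t < 0) by (apply Heps; rewrite Rabs_left1; lra). lra. }
  assert (sx0' : s < x0) by (destruct sx0 as [|<-]; lra).
  destruct (MVT_cor2 h h' s x0 sx0') as [c [Hc hc]].
  { intros c _. apply is_derive_Reals, Dh. }
  assert (hc_neg : h c < 0).
  { destruct (Rlt_or_le (h c) 0) as [|hc0]; [assumption|].
    assert (c <= s) by (apply ub; split; [lra | assumption]). lra. }
  specialize (Hh c hc_neg). nra.
Qed.

Lemma is_derive_exp_weight (g g' : R -> R) K t : is_derive g t (g' t) ->
  is_derive (fun t => g t * exp (- K * t)) t ((g' t - K * g t) * exp (- K * t)).
Proof.
  intros Dg.
  assert (De : is_derive (fun t => exp (- K * t)) t (- K * exp (- K * t)))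
    by (auto_derive; [exact I | ring]).
  replace ((g' t - K * g t) * exp (- K * t))
    with (plus (mult (g' t) (exp (- K * t))) (mult (g t) (- K * exp (- K * t))))
    by (unfold plus, mult; simpl; ring).
  apply (is_derive_mult g (fun t => exp (- K * t))); [assumption | assumption |].
  intros; apply Rmult_comm.
Qed.

Lemma gronwall_neg_backward (g g' : R -> R) K x0 y :
  (forall t, is_derive g t (g' t)) -> (forall t, g t < 0 -> K * g t <= g' t) ->
  g x0 < 0 -> y <= x0 -> g y < 0.
Proof.
  intros Dg Hg gx0 yx0.
  assert (ep : forall t, 0 < exp (- K * t)) by (intros; apply exp_pos).
  assert (sign : forall t, g t * exp (- K * t) < 0 <-> g t < 0).
  { intros t. specialize (ep t). split; intros; nra. }
  apply sign, (neg_backward_of_deriv_nonneg _ _ x0 y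
                (fun t => is_derive_exp_weight g g' K t (Dg t))); [| now apply sign | assumption].
  intros t ht%sign. specialize (Hg t ht). specialize (ep t). nra.
Qed.

Lemma gronwall_nonincreasing (g g' : R -> R) K a b :
  (forall t, is_derive g t (g' t)) -> (forall t, g' t <= K * g t) ->
  a <= b -> g b * exp (- K * b) <= g a * exp (- K * a).
Proof.
  intros Dg Hg [ab | <-]; [| lra].
  destruct (MVT_cor2 (fun t => g t * exp (- K * t))
              (fun t => (g' t - K * g t) * exp (- K * t)) a b ab) as [c [Hc _]].
  { intros c _. apply is_derive_Reals, is_derive_exp_weight, Dg. }
  assert (0 < exp (- K * c)) by apply exp_pos.
  assert ((g' c - K * g c) * exp (- K * c) <= 0) by (specialize (Hg c); nra).
  nra.
Qed.

Lemma is_derive_reflect (g D : R -> R) a :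
  (forall t, is_derive g t (a - D t)) ->
  forall t, is_derive (fun t => g (- t)) t (- a - - D (- t)).
Proof.
  intros Dg t.
  replace (- a - - D (- t)) with (scal (-1) (a - D (- t)))
    by (unfold scal; simpl; unfold mult; simpl; ring).
  apply (is_derive_comp g (fun t => - t)); [apply Dg |].
  auto_derive; [exact I | ring].
Qed.

Lemma periodic_ode_neg_everywhere_nonneg_forcing (g D : R -> R) a B t0 :
  0 <= a -> (forall t, is_derive g t (a - D t)) ->
  (forall t, Rabs (D t) <= B * Rabs (g t)) -> periodic1 g ->
  g t0 < 0 -> forall y, g y < 0.
Proof.
  intros a0 Dg HD P gt0 y.
  destruct (periodic1_shift_into g P (t0 - 1) y) as [t [ht ->]].
  apply (gronwall_neg_backward g (fun t => a - D t) B t0 t Dg); [| assumption | lra].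
  intros s gs. specialize (HD s). rewrite (Rabs_left (g s)) in HD by assumption.
  pose proof (Rle_abs (D s)). lra.
Qed.

Lemma periodic_ode_neg_everywhere (g D : R -> R) a B t0 :
  (forall t, is_derive g t (a - D t)) ->
  (forall t, Rabs (D t) <= B * Rabs (g t)) -> periodic1 g ->
  g t0 < 0 -> forall y, g y < 0.
Proof.
  intros Dg HD P gt0 y. destruct (Rle_or_lt 0 a) as [a0 | a0].
  - exact (periodic_ode_neg_everywhere_nonneg_forcing g D a B t0 a0 Dg HD P gt0 y).
  - rewrite <- (Ropp_involutive y).
    apply (periodic_ode_neg_everywhere_nonneg_forcing (fun t => g (- t))
             (fun t => - D (- t)) (- a) B (- t0));
      [lra | now apply is_derive_reflect | | now apply periodic1_reflect |].
    + intros t. rewrite Rabs_Ropp. apply HD.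
    + now rewrite Ropp_involutive.
Qed.

Lemma periodic_ode_harnack_nonpos_forcing (g D : R -> R) a K :
  0 <= K -> a <= 0 -> (forall t, is_derive g t (a - D t)) ->
  (forall t, Rabs (D t) <= K * g t) -> periodic1 g -> (forall t, 0 <= g t) ->
  forall x y, g y <= exp K * g x.
Proof.
  intros K0 a0 Dg HD P gpos x y.
  destruct (periodic1_shift_into g P x y) as [t [ht ->]].
  assert (Hdec : g t * exp (- K * t) <= g x * exp (- K * x)).
  { apply (gronwall_nonincreasing g (fun t => a - D t)); [assumption | | lra].
    intros s. specialize (HD s). pose proof (Rabs_maj2 (D s)). lra. }
  assert (Hexp : exp (- K * x) <= exp K * exp (- K * t)).
  { rewrite <- exp_plus. apply Rnot_lt_le. intros Hlt%exp_lt_inv. nra. }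
  apply (Rmult_le_reg_r (exp (- K * t))); [apply exp_pos |].
  specialize (gpos x). nra.
Qed.

Lemma periodic_ode_harnack (g D : R -> R) a K :
  0 <= K -> (forall t, is_derive g t (a - D t)) ->
  (forall t, Rabs (D t) <= K * g t) -> periodic1 g -> (forall t, 0 <= g t) ->
  forall x y, g y <= exp K * g x.
Proof.
  intros K0 Dg HD P gpos x y. destruct (Rle_or_lt a 0) as [a0 | a0].
  - exact (periodic_ode_harnack_nonpos_forcing g D a K K0 a0 Dg HD P gpos x y).
  - rewrite <- (Ropp_involutive x), <- (Ropp_involutive y).
    apply (periodic_ode_harnack_nonpos_forcing (fun t => g (- t)) (fun t => - D (- t)) (- a));
      [assumption | lra | now apply is_derive_reflect | | now apply periodic1_reflect |].
    + intros t. rewrite Rabs_Ropp. apply HD.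
    + intros t. apply gpos.
Qed.

Lemma harnack_mean_bounds (g : R -> R) K : (forall x, continuous g x) ->
  (forall x y, g y <= exp K * g x) ->
  forall x, RInt g 0 1 * exp (- K) <= g x /\ g x <= RInt g 0 1 * exp K.
Proof.
  intros C H x.
  assert (cancel : forall u z, z * exp u * exp (- u) = z).
  { intros u z. rewrite Rmult_assoc, <- exp_plus, Rplus_opp_r, exp_0. ring. }
  pose proof (exp_pos K). pose proof (exp_pos (- K)). split.
  - assert (RInt g 0 1 <= g x * exp K) by (rewrite Rmult_comm; apply RInt_le_const; auto).
    rewrite <- (cancel K (g x)). now apply Rmult_le_compat_r; [lra |].
  - assert (g x * exp (- K) <= RInt g 0 1).
    { apply RInt_ge_const; [assumption |]. intros y.
      rewrite <- (cancel K (g y)). apply Rmult_le_compat_r; [lra |].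
      rewrite Rmult_comm. apply H. }
    rewrite <- (cancel (- K) (g x)), Ropp_involutive.
    now apply Rmult_le_compat_r; [lra |].
Qed.

Lemma abs_sub_le_of_Derive_bound (G : R -> R) lo hi B :
  (forall x, ex_derive G x) -> (forall p, lo <= p <= hi -> Rabs (Derive G p) <= B) ->
  forall u v, lo <= u <= hi -> lo <= v <= hi -> Rabs (G v - G u) <= B * Rabs (v - u).
Proof.
  intros DG HB u v hu hv.
  destruct (MVT_gen G u v (Derive G)) as [c [hc ->]].
  - intros c _. now apply Derive_correct.
  - intros c _. apply continuity_pt_filterlim, continuous_of_derivable, DG.
  - rewrite Rabs_mult. apply Rmult_le_compat_r; [apply Rabs_pos |].
    apply HB. revert hc. unfold Rmin, Rmax. destruct (Rle_dec u v); lra.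
Qed.

Lemma C1_lipschitz_on (G : R -> R) lo hi : is_C1 G ->
  exists B, forall u v, lo <= u <= hi -> lo <= v <= hi -> Rabs (G v - G u) <= B * Rabs (v - u).
Proof.
  intros [DG CG]. destruct (Rle_or_lt lo hi) as [le | lt]; [| exists 0; intros; lra].
  destruct (bounded_on_segment (Derive G) lo hi le CG) as [B HB].
  exists B. now apply abs_sub_le_of_Derive_bound.
Qed.

Lemma K1_ge (G f1 f2 : R -> R) : (forall p, continuous (Derive G) p) ->
  forall p, min01 f1 <= p <= max01 f2 -> Rabs (Derive G p) <= K1 G f1 f2.
Proof.
  intros CG p hp.
  destruct (bounded_on_segment (Derive G) (min01 f1) (max01 f2)) as [B HB];
    [lra | assumption |].
  apply (real_Lub_Rbar_ge _ B).
  - intros z [q [hq ->]]. now apply HB.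
  - now exists p.
Qed.

Lemma corrector_continuous G V theta f : is_f_theta G V theta f -> forall x, continuous f x.
Proof. intros [[Df _] _]. now apply continuous_of_derivable. Qed.

Lemma corrector_range G V theta f : is_f_theta G V theta f ->
  forall x, min01 f <= f x <= max01 f.
Proof.
  intros Hf x. pose proof (corrector_continuous G V theta f Hf) as C.
  destruct Hf as [_ [P _]]. split; [now apply min01_le | now apply max01_ge].
Qed.

Section CorrectorDifference.

Variables (G V : R -> R) (theta1 theta2 : R) (f1 f2 : R -> R).
Hypothesis HG : is_C1 G.
Hypothesis Hf1 : is_f_theta G V theta1 f1.
Hypothesis Hf2 : is_f_theta G V theta2 f2.
Hypothesis Htheta : theta1 < theta2.

Lemma corrector_diff_ode : exists a, forall t,
  is_derive (fun t => f2 t - f1 t) t (a - (G (f2 t) - G (f1 t))).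
Proof.
  destruct Hf1 as [[D1 _] [_ [_ [H1 E1]]]], Hf2 as [[D2 _] [_ [_ [H2 E2]]]].
  exists (H2 - H1). intros t.
  replace (H2 - H1 - (G (f2 t) - G (f1 t))) with (minus (Derive f2 t) (Derive f1 t))
    by (unfold minus, plus, opp; simpl; specialize (E1 t); specialize (E2 t); lra).
  apply (is_derive_minus f2 f1); now apply Derive_correct.
Qed.

Lemma corrector_diff_continuous : forall x, continuous (fun t => f2 t - f1 t) x.
Proof.
  destruct corrector_diff_ode as [a Dg].
  apply continuous_of_derivable. intros t. eexists. apply Dg.
Qed.

Lemma corrector_diff_periodic : periodic1 (fun t => f2 t - f1 t).
Proof.
  destruct Hf1 as [_ [P1 _]], Hf2 as [_ [P2 _]]. intros t. now rewrite P1, P2.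
Qed.

Lemma corrector_diff_mean : RInt (fun t => f2 t - f1 t) 0 1 = theta2 - theta1.
Proof.
  assert (I := fun theta f (Hf : is_f_theta G V theta f) =>
    @ex_RInt_continuous R_CompleteNormedModule f 0 1
      (fun x _ => corrector_continuous G V theta f Hf x)).
  assert (E := RInt_minus f2 f1 0 1 (I _ _ Hf2) (I _ _ Hf1)).
  unfold minus, plus, opp in E; simpl in E. unfold Rminus. rewrite E.
  destruct Hf1 as [_ [_ [-> _]]], Hf2 as [_ [_ [-> _]]]. reflexivity.
Qed.

Lemma corrector_diff_nonneg : forall t, f1 t <= f2 t.
Proof.
  destruct corrector_diff_ode as [a Dg].
  set (lo := Rmin (min01 f1) (min01 f2)). set (hi := Rmax (max01 f1) (max01 f2)).
  assert (range : forall t, lo <= f1 t <= hi /\ lo <= f2 t <= hi).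
  { intros t.
    pose proof (corrector_range _ _ _ _ Hf1 t). pose proof (corrector_range _ _ _ _ Hf2 t).
    pose proof (Rmin_l (min01 f1) (min01 f2)). pose proof (Rmin_r (min01 f1) (min01 f2)).
    pose proof (Rmax_l (max01 f1) (max01 f2)). pose proof (Rmax_r (max01 f1) (max01 f2)).
    unfold lo, hi. lra. }
  destruct (C1_lipschitz_on G lo hi HG) as [B HB].
  assert (HD : forall t, Rabs (G (f2 t) - G (f1 t)) <= B * Rabs (f2 t - f1 t)).
  { intros t. apply HB; apply range. }
  intros t. apply Rnot_lt_le. intros lt.
  assert (neg := periodic_ode_neg_everywhere _ _ a B t Dg HD corrector_diff_periodic
                   ltac:(lra)).
  assert (theta2 - theta1 <= 0); [| lra].
  rewrite <- corrector_diff_mean.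
  apply RInt_le_const; [exact corrector_diff_continuous |]. intros y. left. apply neg.
Qed.

Lemma corrector_diff_harnack :
  forall x y, f2 y - f1 y <= exp (K1 G f1 f2) * (f2 x - f1 x).
Proof.
  destruct corrector_diff_ode as [a Dg].
  assert (range : forall t, min01 f1 <= f1 t <= max01 f2 /\ min01 f1 <= f2 t <= max01 f2).
  { intros t.
    pose proof (corrector_range _ _ _ _ Hf1 t). pose proof (corrector_range _ _ _ _ Hf2 t).
    pose proof (corrector_diff_nonneg t). lra. }
  assert (HK := K1_ge G f1 f2 (proj2 HG)).
  apply (periodic_ode_harnack _ (fun t => G (f2 t) - G (f1 t)) a).
  - apply Rle_trans with (Rabs (Derive G (f1 0))); [apply Rabs_pos | apply HK, range].
  - exact Dg.
  - intros t.
    rewrite <- (Rabs_pos_eq (f2 t - f1 t)) by (pose proof (corrector_diff_nonneg t); lra).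
    apply (abs_sub_le_of_Derive_bound G _ _ _ (proj1 HG) HK); apply range.
  - exact corrector_diff_periodic.
  - intros t. pose proof (corrector_diff_nonneg t). lra.
Qed.

End CorrectorDifference.

Theorem lemma4p4 (G V : R -> R) (theta1 theta2 : R) (f1 f2 : R -> R) :
  is_C1 G -> coercive G -> lipschitz V -> periodic1 V ->
  theta1 < theta2 ->
  is_f_theta G V theta1 f1 -> is_f_theta G V theta2 f2 ->
  forall x : R,
    (theta2 - theta1) * exp (- K1 G f1 f2) <= f2 x - f1 x /\
    f2 x - f1 x <= (theta2 - theta1) * exp (K1 G f1 f2).
Proof.
  (* Coercivity of G and the regularity of V only serve the existence of the
     correctors; the estimate does not use them. *)
  intros HG _ _ _ Htheta Hf1 Hf2 x.
  rewrite <- (corrector_diff_mean G V theta1 theta2 f1 f2 Hf1 Hf2).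
  apply (harnack_mean_bounds (fun t => f2 t - f1 t)).
  - exact (corrector_diff_continuous G V theta1 theta2 f1 f2 Hf1 Hf2).
  - exact (corrector_diff_harnack G V theta1 theta2 f1 f2 HG Hf1 Hf2 Htheta).
Qed.
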